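(* Let $p$ be an odd prime and let $x$ be an indeterminate. Then $$\sum_{k=0}^{p-1}\frac{\binom{2k}k^2}{16^k}\big(x^k-(-1)^{\frac{p-1}2}(1-x)^k\big)\equiv\sum_{k=0}^{\frac{p-1}2}\frac{\binom{2k}k^2}{16^k}\big(x^k-(-1)^{\frac{p-1}2}(1-x)^k\big)\equiv 0\pmod{p^2}.$$
   Context: The polynomials involved have rational coefficients whose denominators are prime to $p$; a congruence between such polynomials modulo $p^2$ means that every coefficient of their difference is a rational number whose numerator (in lowest terms) is divisible by $p^2$. *)

From HB Require Import structures.
From mathcomp Require Import all_boot all_order all_algebra.
Set Implicit Arguments. Unset Strict Implicit. Unset Printing Implicit Defensive.
Import Order.TTheory GRing.Theory Num.Theory.
Local Open Scope ring_scope.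

Definition poly_congr (m : nat) (P Q : {poly rat}) : Prop :=
  forall i : nat, (m%:Z %| numq ((P - Q)`_i))%Z.

Definition term2p1 (p k : nat) : {poly rat} :=
  ((('C(k.*2, k) ^ 2)%:R / 16%:R ^+ k) : rat)%:P *
  ('X^k - ((-1) ^+ (p.-1 %/ 2)) *: (1 - 'X) ^+ k).

(* Put n = (p-1)/2.  For n < k < p the prime p divides C(2k,k), so the
   coefficient C(2k,k)^2/16^k is divisible by p^2.  For k <= n it is congruent
   modulo p^2 to the coefficient (-1)^k C(n,k) C(n+k,k) of L(x) = P_n(1-2x),
   P_n the Legendre polynomial: after multiplication by 4^k k!^2, which is prime
   to p, they become prod_(j<k) (2j+1)^2 and prod_(j<k) ((2j+1)^2 - p^2).
   Finally sum_k L_k (x^k - (-1)^n (1-x)^k) = L(x) - (-1)^n L(1-x) = 0, since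
   L(1-x) = (-1)^n L(x). *)

From HB Require Import structures.
From mathcomp Require Import all_boot all_order all_algebra.
From mathcomp Require Import ring zify.
Set Implicit Arguments.
Unset Strict Implicit.
Unset Printing Implicit Defensive.
Import Order.TTheory GRing.Theory Num.Theory.
Local Open Scope ring_scope.

(* [m] divides [q] in the localisation of the integers away from the primes
   of [m]. *)
Definition rat_dvd (m : nat) (q : rat) : Prop :=
  exists2 v : nat, coprime v m & exists u : int, q * v%:R = m%:R * u%:~R.

Section RatDvd.
Variable m : nat.

Lemma rat_dvd0 : rat_dvd m 0.
Proof. by exists 1%N; [exact: coprime1n | exists 0; rewrite !mul0r mulr0]. Qed.

Lemma rat_dvdD x y : rat_dvd m x -> rat_dvd m y -> rat_dvd m (x + y).
Proof.
move=> [v cv [u hu]] [w cw [t ht]]; exists (v * w)%N; first by rewrite coprimeMl cv.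
exists (u * w%:Z + t * v%:Z).
have -> : (x + y) * (v * w)%N%:R = (x * v%:R) * w%:R + (y * w%:R) * v%:R.
  by rewrite natrM; ring.
by rewrite hu ht intrD !intrM !pmulrn; ring.
Qed.

Lemma rat_dvdMint x z : rat_dvd m x -> z \is a Num.int -> rat_dvd m (x * z).
Proof.
move=> [v cv [u hu]] /intrP[n ->]; exists v => //; exists (u * n).
by rewrite mulrAC hu intrM mulrA.
Qed.

Lemma rat_dvd_sum (I : Type) (r : seq I) (P : pred I) (F : I -> rat) :
  (forall i, P i -> rat_dvd m (F i)) -> rat_dvd m (\sum_(i <- r | P i) F i).
Proof.
by move=> dF; apply: (big_ind (rat_dvd m)); [exact: rat_dvd0 | exact: rat_dvdD |].
Qed.

Lemma rat_dvd_numq q : rat_dvd m q -> (m%:Z %| numq q)%Z.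
Proof.
move=> [v cv [u hu]].
have e : numq q * v%:Z = m%:Z * (u * denq q).
  by apply: (@intr_inj rat); rewrite !intrM numqE -!pmulrn mulrAC hu; ring.
by rewrite -(@Gauss_dvdzl _ _ v%:Z) ?e ?dvdz_mulr // coprimezE /= coprime_sym.
Qed.

End RatDvd.

Lemma fact_double k : (k.*2)`! = (k`! * 2 ^ k * \prod_(j < k) j.*2.+1)%N.
Proof.
elim: k => [|k IHk]; first by rewrite big_ord0.
rewrite doubleS !factS IHk big_ord_recr /= expnS.
have -> : k.*2.+2 = (k.+1 * 2)%N by rewrite muln2.
ring.
Qed.

Lemma bin_double_fact k : ('C(k.*2, k) * k`! = 2 ^ k * \prod_(j < k) j.*2.+1)%N.
Proof.
have := bin_fact (leq_addl k k); rewrite addnK addnn fact_double => e.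
apply/eqP; rewrite -(eqn_pmul2r (fact_gt0 k)) -mulnA e; apply/eqP; ring.
Qed.

Lemma coprime_fact p k : prime p -> (k < p)%N -> coprime k`! p.
Proof.
move=> pr_p; elim: k => [|k IHk] lt_kp; first exact: coprime1n.
rewrite factS coprimeMl IHk ?(ltnW lt_kp) // coprime_sym prime_coprime // andbT.
by apply/negP => /(dvdn_leq (ltn0Sn k)); lia.
Qed.

Lemma prime_dvd_bin_double p k :
  prime p -> (k < p <= k.*2)%N -> (p %| 'C(k.*2, k))%N.
Proof.
move=> pr_p /andP[lt_kp le_pk2].
have := bin_fact (leq_addl k k); rewrite addnK addnn => e.
have : (p %| (k.*2)`!)%N by rewrite dvdn_fact // prime_gt0.
by rewrite -e Gauss_dvdl // coprimeMr coprime_sym coprime_fact.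
Qed.

Lemma bin_bin_fact_rec n k :
  ('C(n, k.+1) * 'C(n + k.+1, n) * 4 ^ k.+1 * k.+1`! ^ 2 =
   'C(n, k) * 'C(n + k, n) * 4 ^ k * k`! ^ 2 * (4 * (n - k) * (n + k.+1)))%N.
Proof.
have e : ((n + k.+1) * 'C(n + k, n) = k.+1 * 'C(n + k.+1, n))%N.
  by have := mul_bin_down (n + k.+1) n; rewrite addKn addnS => ->.
transitivity ((k.+1 * 'C(n, k.+1)) * (k.+1 * 'C(n + k.+1, n)) * 4 ^ k.+1 * k`! ^ 2)%N.
  by rewrite factS; ring.
by rewrite mul_bin_left -e expnS; ring.
Qed.

(* With [p = 2n+1] the right-hand side is [prod_(j<k) ((2j+1)^2 - p^2)], which is
   [prod_(j<k) (2j+1)^2] modulo [p^2]. *)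
Lemma signed_bin_bin_fact n k : (k <= n)%N ->
  (-1) ^+ k * ('C(n, k) * 'C(n + k, n) * 4 ^ k * k`! ^ 2)%N%:Z =
  \prod_(j < k) (((j.*2.+1) ^ 2)%N%:Z - ((n.*2.+1) ^ 2)%N%:Z).
Proof.
elim: k => [|k IHk] lt_kn; first by rewrite big_ord0 bin0 addn0 binn.
rewrite big_ord_recr /= -IHk ?(ltnW lt_kn) // bin_bin_fact_rec exprS !PoszM.
rewrite -subzn ?(ltnW lt_kn) //.
have odd_eq x : (x.*2.+1)%:Z = 2 * x%:Z + 1.
  by rewrite -addn1 -muln2 PoszD PoszM mulrC.
by rewrite !odd_eq PoszD -addn1 PoszD; ring.
Qed.

Lemma dvdz_prod_sub (m : int) k (c : nat -> int) :
  (m %| \prod_(j < k) c j - \prod_(j < k) (c j - m))%Z.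
Proof.
elim: k => [|k IHk]; first by rewrite !big_ord0 subrr dvdz0.
rewrite !big_ord_recr /=.
have -> : \prod_(j < k) c j * c k - \prod_(j < k) (c j - m) * (c k - m) =
  (\prod_(j < k) c j - \prod_(j < k) (c j - m)) * c k + m * \prod_(j < k) (c j - m).
  by ring.
by rewrite rpredD ?dvdz_mulr.
Qed.

Lemma coef_1subX_exp (R : nzRingType) n k :
  ((1 - 'X : {poly R}) ^+ n)`_k = (-1) ^+ k * 'C(n, k)%:R.
Proof.
elim: n k => [|n IHn] k.
  by rewrite expr0 coef1; case: k => [|k]; rewrite ?mul1r ?mulr0.
rewrite exprS mulrBl mul1r coefB coefXM; case: k => [|k] /=.
  by rewrite subr0 IHn !bin0.
by rewrite !IHn binS natrD exprS mulrDr mulNr mul1r !mulNr.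
Qed.

Lemma derivn_comp_1subX (R : comNzRingType) (q : {poly R}) m :
  (q \Po (1 - 'X))^`(m) = (-1) ^+ m *: (q^`(m) \Po (1 - 'X)).
Proof.
elim: m => [|m IHm]; first by rewrite !derivn0 expr0 scale1r.
rewrite derivnS IHm derivZ deriv_comp derivB derivC derivX sub0r -derivnS.
by rewrite mulrN1 scalerN -scaleN1r scalerA exprS mulrC.
Qed.

Lemma sum_coef_reflect (R : comNzRingType) (P : {poly R}) (s : R) N :
  (size P <= N)%N ->
  \sum_(0 <= k < N) (P`_k)%:P * ('X^k - s *: (1 - 'X) ^+ k) =
  P - s *: (P \Po (1 - 'X)).
Proof.
move=> le_PN; rewrite (big_cat_nat (leq0n _) le_PN) /=.
rewrite [X in _ + X]big1_seq ?addr0; last first.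
  move=> k /andP[_]; rewrite mem_iota subnKC // => /andP[le_Pk _].
  by rewrite nth_default // mul0r.
rewrite big_mkord.
under eq_bigr => k _ do rewrite mulrBr !mul_polyC scalerA mulrC -scalerA.
by rewrite sumrB -scaler_sumr -poly_def coefK comp_polyE.
Qed.

Lemma coef_reflect_sum_rat_dvd m (c : nat -> rat) (s : rat) a b i :
  s \is a Num.int -> (forall k, (a <= k < b)%N -> rat_dvd m (c k)) ->
  rat_dvd m ((\sum_(a <= k < b) (c k)%:P * ('X^k - s *: (1 - 'X) ^+ k))`_i).
Proof.
move=> s_int dvd_c; rewrite coef_sum big_nat_cond.
apply: rat_dvd_sum => k /andP[/dvd_c dvd_ck _]; rewrite coefCM.
apply: rat_dvdMint => //; apply/polyOverP.
by rewrite rpredB ?polyOverXn ?polyOverZ ?rpredX ?rpredB ?rpred1 ?polyOverX.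
Qed.

(* [legendre n] is the Legendre polynomial [P_n(1 - 2x)], given by Rodrigues'
   formula. *)
Definition legendre (R : nzRingType) n : {poly R} := ('X^n * (1 - 'X) ^+ n)^`N(n).

Lemma coef_legendre (R : nzRingType) n k :
  (legendre R n)`_k = (-1) ^+ k * ('C(n, k) * 'C(n + k, n))%:R.
Proof.
rewrite coef_nderivn coefXnM ltnNge leq_addr /= addKn coef_1subX_exp.
by rewrite natrM mulrA [RHS]mulr_natr.
Qed.

Lemma size_legendre (R : nzRingType) n : (size (legendre R n) <= n.+1)%N.
Proof. by apply/leq_sizeP => k lt_nk; rewrite coef_legendre bin_small ?mulr0. Qed.

Lemma legendre_reflect (R : numFieldType) n :
  legendre R n \Po (1 - 'X) = (-1) ^+ n *: legendre R n.
Proof.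
set Q : {poly R} := 'X^n * (1 - 'X) ^+ n.
have Q_reflect : Q \Po (1 - 'X) = Q.
  rewrite /Q comp_polyM !rmorphXn /= comp_polyX comp_polyB comp_polyC comp_polyX.
  by rewrite opprB addrCA subrr addr0 mulrC.
have dQ_reflect : Q^`(n) \Po (1 - 'X) = (-1) ^+ n *: Q^`(n).
  by rewrite -{2}Q_reflect derivn_comp_1subX scalerA -expr2 sqrr_sign scale1r.
have fact_neq0 : (n`!%:R : R) != 0 by rewrite pnatr_eq0 -lt0n fact_gt0.
apply: (scalerI fact_neq0); rewrite -comp_polyZ scalerA mulrC -scalerA.
by rewrite !scaler_nat -nderivn_def.
Qed.

Lemma legendre_reflect_sum (R : numFieldType) n :
  \sum_(0 <= k < n.+1)
    ((legendre R n)`_k)%:P * ('X^k - (-1) ^+ n *: (1 - 'X) ^+ k) = 0.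
Proof.
rewrite sum_coef_reflect ?size_legendre // legendre_reflect scalerA.
by rewrite -expr2 sqrr_sign scale1r subrr.
Qed.

Definition cbin_sq k : rat := ('C(k.*2, k) ^ 2)%:R / 16%:R ^+ k.

Lemma cbin_sq_mul k :
  cbin_sq k * (4 ^ k * k`! ^ 2)%:R = (\prod_(j < k) ((j.*2.+1) ^ 2)%N%:Z)%:~R.
Proof.
have two_exp_neq0 : (2%:R ^+ k : rat) != 0 by rewrite expf_neq0 ?pnatr_eq0.
have e : \prod_(j < k) (j.*2.+1)%:R = ('C(k.*2, k)%:R * k`!%:R : rat) / 2%:R ^+ k.
  by rewrite -natrM bin_double_fact natrM natrX natr_prod mulrC mulKf.
rewrite rmorph_prod /=; under eq_bigr do rewrite -pmulrn natrX.
rewrite prodrXl e /cbin_sq natrM !natrX.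
have -> : (16%:R : rat) = 2%:R ^+ 4 by rewrite -natrX.
have -> : (4%:R : rat) = 2%:R ^+ 2 by rewrite -natrX.
by rewrite -!exprM ![(_ * k)%N]mulnC !exprM; field.
Qed.

Lemma cbin_sq_legendre_rat_dvd p n k : prime p -> p = n.*2.+1 -> (k <= n)%N ->
  rat_dvd (p ^ 2) (cbin_sq k - (legendre rat n)`_k).
Proof.
move=> pr_p def_p le_kn; exists (4 ^ k * k`! ^ 2)%N.
  have lt_kp : (k < p)%N by rewrite def_p; lia.
  rewrite coprimeXr // coprimeMl (coprimeXl _ (coprime_fact pr_p lt_kp)) andbT.
  by rewrite def_p -[4%N]/(2 ^ 2)%N -expnM coprimeXl // coprime2n /= odd_double.
have legendre_mul : (legendre rat n)`_k * (4 ^ k * k`! ^ 2)%:R =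
    (\prod_(j < k) (((j.*2.+1) ^ 2)%N%:Z - ((n.*2.+1) ^ 2)%N%:Z))%:~R.
  rewrite coef_legendre -signed_bin_bin_fact // intrM rmorphXn rmorphN1 -mulrA.
  by rewrite -natrM !mulnA.
have [q eq_q] :=
  dvdzP (dvdz_prod_sub ((p ^ 2)%N%:Z) k (fun j => ((j.*2.+1) ^ 2)%N%:Z)).
exists q; rewrite mulrBl cbin_sq_mul legendre_mul -def_p -intrB eq_q intrM.
by rewrite mulrC pmulrn.
Qed.

Lemma cbin_sq_rat_dvd p k : prime p -> odd p -> (k < p <= k.*2)%N ->
  rat_dvd (p ^ 2) (cbin_sq k).
Proof.
move=> pr_p odd_p range_k.
have [c def_C] := dvdnP (prime_dvd_bin_double pr_p range_k).
exists (16 ^ k)%N.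
  by rewrite coprimeXr // -[16%N]/(2 ^ 4)%N -expnM coprimeXl ?coprime2n.
exists (c ^ 2)%N%:Z.
rewrite /cbin_sq def_C [(16 ^ k)%:R]natrX divfK ?expf_neq0 ?pnatr_eq0 //.
by rewrite -pmulrn expnMn natrM mulrC.
Qed.

Theorem theorem2p1 (p : nat) (hp : prime p) (hodd : odd p) :
  poly_congr (p ^ 2)
    (\sum_(0 <= k < p) term2p1 p k)
    (\sum_(0 <= k < (p.-1 %/ 2).+1) term2p1 p k)
  /\
  poly_congr (p ^ 2) (\sum_(0 <= k < (p.-1 %/ 2).+1) term2p1 p k) 0.
Proof.
set n := (p.-1 %/ 2)%N.
have def_p : p = n.*2.+1 by move: (odd_double_half p); rewrite hodd /n -divn2; lia.
have sign_int : (-1) ^+ n \is a @Num.int rat by rewrite rpredX ?rpredN1.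
have le_np : (n.+1 <= p)%N by rewrite def_p; lia.
rewrite /term2p1 -/n; split=> i; apply: rat_dvd_numq.
  rewrite (big_cat_nat (leq0n _) le_np) /= addrAC subrr add0r.
  apply: coef_reflect_sum_rat_dvd => // k /andP[lt_nk lt_kp].
  by apply: cbin_sq_rat_dvd => //; rewrite lt_kp def_p; lia.
rewrite -[X in _ - X](legendre_reflect_sum rat n) -sumrB.
under eq_bigr do rewrite -mulrBl -polyCB.
apply: coef_reflect_sum_rat_dvd => // k /andP[_ le_kn].
exact: cbin_sq_legendre_rat_dvd.
Qed.
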